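(* A graph $G$ is well-bicovered with $b(G)=|V(G)|-1$ if and only if there exists an odd cycle $C$ in $G$ such that every odd cycle of $G$ contains every vertex of $C$.
   Context: All graphs are finite and simple; ''subgraph'' means induced subgraph. $b(G)$ denotes the maximum order of an induced bipartite subgraph of $G$. $G$ is well-bicovered if every vertex-inclusion-maximal induced bipartite subgraph of $G$ has the same order. *)

From mathcomp Require Import all_boot.
Set Implicit Arguments. Unset Strict Implicit. Unset Printing Implicit Defensive.

(* A finite simple graph is a symmetric irreflexive relation e on a finType T. *)

Definition induced_bip (T : finType) (e : rel T) (S : {set T}) : bool :=
  [exists f : {ffun T -> bool},
     [forall x in S, forall y in S, e x y ==> (f x != f y)]].

Definition bip_num (T : finType) (e : rel T) : nat :=
  \max_(S : {set T} | induced_bip e S) #|S|.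

Definition well_bicovered (T : finType) (e : rel T) : Prop :=
  forall S1 S2 : {set T},
    maxset (induced_bip e) S1 -> maxset (induced_bip e) S2 -> #|S1| = #|S2|.

(* An odd cycle: a sequence of pairwise distinct vertices v0..v_{k-1}, k odd, k >= 3,
   with v_i ~ v_{i+1} and v_{k-1} ~ v0. Its vertex set is the set of entries of s. *)
Definition odd_cycle (T : finType) (e : rel T) (s : seq T) : bool :=
  [&& uniq s, 2 < size s, odd (size s) & cycle e s].

From mathcomp Require Import all_boot.

(* A vertex set induces a bipartite subgraph iff it contains no odd cycle: a
   proper 2-colouring forbids odd closed walks, and conversely, colouring each
   component by the parity of walks from its root fails only if some vertex is
   joined to itself by an odd closed walk, which contains an odd cycle.
   If the odd cycle C lies inside every odd cycle, then deleting any vertex w of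
   C leaves a bipartite graph, and every maximal bipartite set misses a vertex w
   of C, hence is V - w.  Conversely, if all maximal bipartite sets have
   |V| - 1 vertices, the set W of vertices whose deletion leaves a bipartite
   graph is not bipartite: a maximal bipartite superset of W is some V - w with
   w in W.  So W contains an odd cycle, and each vertex of W lies on every odd
   cycle. *)

Set Implicit Arguments. Unset Strict Implicit. Unset Printing Implicit Defensive.

Lemma not_uniq_split (T : eqType) (s : seq T) :
  ~~ uniq s -> exists a x b c, s = a ++ x :: b ++ x :: c.
Proof.
elim: s => [|y s IH] //= /nandP [/negbNE /splitPr [b c] | /IH [a [x [b [c ->]]]]].
- by exists [::], y, b, c.
- by exists (y :: a), x, b, c.
Qed.

Lemma card_setC1P (T : finType) (S : {set T}) :
  reflect (exists w, S = [set~ w]) (#|S|.+1 == #|T|).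
Proof.
apply: (iffP eqP) => [cardS | [w ->]].
- have /cards1P [w Sw] : #|~: S| == 1.
    by rewrite -(eqn_add2l #|S|) cardsC -cardS addn1.
  by exists w; rewrite -Sw setCK.
- by rewrite cardsC1 prednK //; apply/card_gt0P; exists w.
Qed.

Section ClosedWalks.
Variables (T : finType) (r : rel T).

Lemma cycle_cat_at x b c :
  cycle r (x :: b ++ x :: c) = cycle r (x :: b) && cycle r (x :: c).
Proof. by rewrite /= rcons_cat cat_path /= !rcons_path andbA. Qed.

Lemma odd_walk_odd_cycle s : irreflexive r -> cycle r s -> odd (size s) ->
  exists2 D, odd_cycle r D & {subset D <= s}.
Proof.
move=> irr; have [n] := ubnP (size s); elim: n s => // n IH s /ltnSE les cs os.
case us: (uniq s).
  exists s => //; rewrite /odd_cycle us os cs andbT.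
  by case: s {les us} cs os => [|x [|y [|z s]]] //=; rewrite irr.
have [a [x [b [c sE]]]] := not_uniq_split (negbT us).
have rotE : rot (size a) s = (x :: b) ++ (x :: c ++ a).
  by rewrite sE rot_size_cat /= -catA.
have /andP [cb cca] : cycle r (x :: b) && cycle r (x :: c ++ a).
  by rewrite -cycle_cat_at -cat_cons -rotE rot_cycle.
have sizeE : size s = size (x :: b) + size (x :: c ++ a).
  by rewrite -(size_rot (size a)) rotE size_cat.
have sub_s t : {subset t <= (x :: b) ++ (x :: c ++ a)} -> {subset t <= s}.
  by move=> tsub y /tsub; rewrite -rotE mem_rot.
move: os; rewrite sizeE oddD; case ob: (odd (size (x :: b))) => /= oca.
- have [|D oD Db] := IH _ _ cb ob; last first.
    exists D => // y /Db; apply: sub_s => {}y.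
    by rewrite mem_cat => ->.
  by apply: leq_trans les; rewrite sizeE addnS ltnS leq_addr.
- have [|D oD Dca] := IH _ _ cca oca; last first.
    exists D => // y /Dca; apply: sub_s => {}y.
    by rewrite mem_cat orbC => ->.
  by apply: leq_trans les; rewrite sizeE addSn ltnS leq_addl.
Qed.

Lemma proper_colouring_path (f : T -> bool) x p :
  (forall x y, r x y -> f x != f y) -> path r x p ->
  f (last x p) = f x (+) odd (size p).
Proof.
move=> fP; elim: p x => [|y p IH] x /=; first by rewrite addbF.
case/andP => /fP fxy /IH ->.
by move: fxy; case: (f x); case: (f y); case: (odd (size p)).
Qed.

Lemma proper_colouring_cycle_even (f : T -> bool) s :
  (forall x y, r x y -> f x != f y) -> cycle r s -> ~~ odd (size s).
Proof.
case: s => [|x p] //= fP /(proper_colouring_path fP).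
by rewrite last_rcons size_rcons /=; case: (f x); case: (odd (size p)).
Qed.

End ClosedWalks.

Section DoubleCover.
Variables (T : finType) (r : rel T).

Definition double_cover : rel (T * bool) := fun u v => r u.1 v.1 && (u.2 != v.2).

Lemma double_cover_sym : symmetric r -> symmetric double_cover.
Proof. by move=> rsym u v; rewrite /double_cover rsym eq_sym. Qed.

Lemma double_cover_path u p : path double_cover u p ->
  path r u.1 (map fst p) /\ (last u p).2 = u.2 (+) odd (size p).
Proof.
elim: p u => [|v p IH] u /=; first by rewrite addbF.
case/andP => /andP [ruv neq] /IH [-> ->]; rewrite ruv; split => //.
by move: neq; case: u.2; case: v.2; case: (odd (size p)).
Qed.

Lemma connect_double_cover a b c : connect r a b ->
  exists d, connect double_cover (a, c) (b, d).
Proof.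
case/connectP => p; elim: p a c => [|v p IH] a c /=.
  by move=> _ ->; exists c.
case/andP => rav /IH /[apply] /(_ (~~ c)) [d vd]; exists d.
apply: connect_trans vd.
by apply: connect1; rewrite /double_cover /= rav; case: c.
Qed.

Lemma double_cover_odd_cycle x : irreflexive r ->
  connect double_cover (x, false) (x, true) -> exists D, odd_cycle r D.
Proof.
move=> irr /connectP [p]; case/lastP: p => [|q z] //.
rewrite last_rcons => walk zE.
rewrite -zE in walk; case/double_cover_path: walk.
rewrite map_rcons last_rcons size_rcons /= => closed parity.
have [|D oD _] := odd_walk_odd_cycle (s := x :: map fst q) irr closed.
  by rewrite /= size_map -parity.
by exists D.
Qed.

Lemma proper_colouring_or_odd_cycle : symmetric r -> irreflexive r ->
  (exists f : T -> bool, forall x y, r x y -> f x != f y) \/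
  (exists D, odd_cycle r D).
Proof.
move=> rsym irr.
case: (pickP (fun x => connect double_cover (x, false) (x, true))) => [x | no_odd].
  by move/(double_cover_odd_cycle irr); right.
left; have csym := sym_connect_sym rsym.
have dsym := sym_connect_sym (double_cover_sym rsym).
have colourE u y c : connect double_cover u (y, c) ->
    connect double_cover u (y, true) = c.
  case: c => // uy; apply/negP => uy'.
  rewrite dsym in uy; have /= := no_odd y.
  by rewrite (connect_trans uy uy').
exists (fun x => connect double_cover (root r x, false) (x, true)) => x y rxy.
have -> : root r y = root r x.
  by apply/esym/(rootP csym)/connect1.
have [c xc] := connect_double_cover false (etrans (csym _ _) (connect_root r x)).
have yc : connect double_cover (root r x, false) (y, ~~ c).
  apply: (connect_trans xc) (connect1 _).
  by rewrite /double_cover /= rxy; case: (c).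
by rewrite (colourE _ _ _ xc) (colourE _ _ _ yc); case: (c).
Qed.

End DoubleCover.

Section InducedBipartite.
Variables (T : finType) (e : rel T).

Definition induced_rel (S : {set T}) : rel T :=
  fun x y => [&& x \in S, y \in S & e x y].

Lemma induced_bipP (S : {set T}) :
  reflect (exists f : T -> bool, forall x y, induced_rel S x y -> f x != f y)
          (induced_bip e S).
Proof.
apply: (iffP existsP) => [[f /forallP fP] | [f fP]].
  exists f => x y /and3P [xS yS exy].
  by move: (fP x); rewrite xS => /forallP /(_ y); rewrite yS exy.
exists [ffun x => f x]; apply/forallP => x; apply/implyP => xS.
apply/forallP => y; apply/implyP => yS; apply/implyP => exy.
by rewrite !ffunE fP // /induced_rel xS yS exy.
Qed.

Lemma cycle_induced_rel (S : {set T}) (D : seq T) :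
  {subset D <= S} -> cycle (induced_rel S) D = cycle e D.
Proof.
move=> DS; apply: (@eq_in_cycle _ (mem S)); last by apply/allP.
by move=> x y xS yS; rewrite /induced_rel xS yS.
Qed.

Lemma cycle_induced_rel_sub (S : {set T}) (D : seq T) :
  cycle (induced_rel S) D -> {subset D <= S}.
Proof. by move=> cD x /(next_cycle cD) /and3P []. Qed.

Hypotheses (esym : symmetric e) (eirr : irreflexive e).

Lemma induced_bipPn (S : {set T}) :
  reflect (exists2 D, odd_cycle e D & {subset D <= S}) (~~ induced_bip e S).
Proof.
apply: (iffP idP) => [nbip | [D /and4P [_ _ oD cD] DS]]; last first.
  apply/induced_bipP => -[f fP].
  have := proper_colouring_cycle_even (s := D) fP.
  by rewrite cycle_induced_rel // cD oD => /(_ isT).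
have induced_sym : symmetric (induced_rel S).
  by move=> x y; rewrite /induced_rel esym andbCA andbA.
have induced_irr : irreflexive (induced_rel S).
  by move=> x; rewrite /induced_rel eirr !andbF.
case: (proper_colouring_or_odd_cycle induced_sym induced_irr) => [fP | [D oD]].
  by case/negP: nbip; apply/induced_bipP.
case/and4P: oD => uD sD oD cD; have DS := cycle_induced_rel_sub cD.
by exists D => //; rewrite /odd_cycle uD sD oD -(cycle_induced_rel DS).
Qed.

End InducedBipartite.

Section BipartiteNumber.
Variables (T : finType) (e : rel T).

Lemma bip_num_maxset :
  exists2 S, maxset (induced_bip e) S & #|S| = bip_num e.
Proof.
have bip0 : induced_bip e set0.
  by apply/induced_bipP; exists xpred0 => x y /and3P []; rewrite inE.
have [|S0 bipS0 S0E] :=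
  eq_bigmax_cond (fun S : {set T} => #|S|) (A := induced_bip e).
  by apply/card_gt0P; exists set0.
have [S maxS S0S] := maxset_exists bipS0.
exists S => //; apply/anti_leq/andP; split.
  exact: (leq_bigmax_cond _ (maxsetp maxS)).
by rewrite /bip_num S0E subset_leq_card.
Qed.

Definition bip_deletions : {set T} := [set w | induced_bip e [set~ w]].

Hypotheses (esym : symmetric e) (eirr : irreflexive e).

Lemma bip_deletion_in_odd_cycle w D :
  w \in bip_deletions -> odd_cycle e D -> w \in D.
Proof.
rewrite inE => bip_w oD; apply: contraLR bip_w => wD.
apply/(induced_bipPn esym eirr); exists D => // y yD.
by rewrite !inE; apply: contraNneq wD => <-.
Qed.

Lemma bip_deletions_not_bip :
  well_bicovered e -> bip_num e + 1 = #|T| -> ~~ induced_bip e bip_deletions.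
Proof.
move=> wb bipE; apply/negP => bipW.
have [S maxS WS] := maxset_exists bipW.
have [S1 maxS1 S1E] := bip_num_maxset.
have /card_setC1P [w Sw] : #|S|.+1 == #|T|.
  by rewrite (wb _ _ maxS maxS1) S1E -addn1 bipE.
have wW : w \in bip_deletions by rewrite inE -Sw (maxsetp maxS).
by have := subsetP WS w wW; rewrite Sw !inE eqxx.
Qed.

End BipartiteNumber.

Section CommonOddCycle.
Variables (T : finType) (e : rel T) (C : seq T).
Hypotheses (esym : symmetric e) (eirr : irreflexive e).
Hypotheses (oddC : odd_cycle e C)
           (C_sub_odd : forall D, odd_cycle e D -> {subset C <= D}).

Lemma induced_bip_setC1 w : w \in C -> induced_bip e [set~ w].
Proof.
move=> wC; apply: contraT => /(induced_bipPn esym eirr) [D oD DsubC1].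
by have := DsubC1 w (C_sub_odd oD wC); rewrite !inE eqxx.
Qed.

Lemma maxset_bip_card S : maxset (induced_bip e) S -> #|S|.+1 = #|T|.
Proof.
move=> maxS; have /allPn [w wC wS] : ~~ all (mem S) C.
  apply: contraL (maxsetp maxS) => /allP CS.
  by apply/(induced_bipPn esym eirr); exists C.
have SC1 : S \subset [set~ w].
  by apply/subsetP => y yS; rewrite !inE; apply: contraNneq wS => <-.
rewrite -(maxsetsup maxS (induced_bip_setC1 wC) SC1); apply/eqP/card_setC1P.
by exists w.
Qed.

End CommonOddCycle.

Theorem mainTheorem9 (T : finType) (e : rel T)
  (esym : symmetric e) (eirr : irreflexive e) :
  (well_bicovered e /\ bip_num e + 1 = #|T|) <->
  (exists C : seq T, odd_cycle e C /\
     forall D : seq T, odd_cycle e D -> {subset C <= D}).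
Proof.
split=> [[wb bipE] | [C [oddC C_sub_odd]]].
  have /(induced_bipPn esym eirr) [C oddC CW] := bip_deletions_not_bip wb bipE.
  exists C; split=> // D oddD w /CW wW.
  exact: (bip_deletion_in_odd_cycle esym eirr wW oddD).
have maxE := maxset_bip_card esym eirr oddC C_sub_odd.
have [S maxS <-] := bip_num_maxset e.
split=> [S1 S2 /maxE card1 /maxE card2 | ]; last by rewrite addn1 maxE.
by apply: succn_inj; rewrite card1 card2.
Qed.
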